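(* Let $X,Y$ be finite sets with $\max\{|X|,|Y|\}\le N$, $c\in\mathbb R_+^{X\times Y}$, and $\mu=r/M\in\mathcal P(X)$, $\nu=s/M\in\mathcal P(Y)$ for a positive integer $M$ and $r\in\mathbb Z_{++}^X$, $s\in\mathbb Z_{++}^Y$. Let $\varepsilon_1>\varepsilon_2>0$ and let $(\alpha_a,\beta_a)$ be maximizers of $J_{\varepsilon_a}$, $a=1,2$. Run the asynchronous Sinkhorn iteration with parameter $\varepsilon=\varepsilon_2$ initialized with $v^{(0)}=\exp(\beta_1/\varepsilon_2)$. Then for every $q_{\mathrm{target}}\in(0,1)$ there exists $$n\le2+\frac{\varepsilon_1}{\varepsilon_2}\cdot\frac{N(4\log N+24\log M)+\log M}{1-q_{\mathrm{target}}}$$ with $q^{(n)}\ge q_{\mathrm{target}}$.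
   Context: For $\varepsilon>0$, $K_\varepsilon(x,y)=\exp(-c(x,y)/\varepsilon)\mu(x)\nu(y)$ and $J_\varepsilon(\alpha,\beta)=\langle\alpha,\mu\rangle+\langle\beta,\nu\rangle-\varepsilon\sum_{x,y}K_\varepsilon(x,y)(\exp((\alpha(x)+\beta(y))/\varepsilon)-1)$. Asynchronous Sinkhorn iteration with parameter $\varepsilon$ and kernel $K=K_\varepsilon$: given $v^{(0)}\in\mathbb R_{++}^Y$, for $\ell\ge0$: $u^{(\ell+1)}=\mu\oslash(Kv^{(\ell)})$, $\hat v^{(\ell+1)}=\nu\oslash(K^\top u^{(\ell+1)})$, $v^{(\ell+1)}=\min\{v^{(\ell)},\hat v^{(\ell+1)}\}$ componentwise, $\pi^{(\ell+1)}=\mathrm{diag}(u^{(\ell+1)})K\mathrm{diag}(v^{(\ell+1)})$, $q^{(\ell+1)}=\sum_{x,y}\pi^{(\ell+1)}(x,y)$; $\oslash$ is componentwise division. *)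

From mathcomp Require Import all_boot all_order all_algebra.
From mathcomp Require Import reals sequences exp.
Set Implicit Arguments. Unset Strict Implicit. Unset Printing Implicit Defensive.
Import Order.TTheory GRing.Theory Num.Theory.
Local Open Scope ring_scope.

Section Sinkhorn.
Variables (R : realType) (X Y : finType).

Definition Kmat (eps : R) (c : X -> Y -> R) (mu : X -> R) (nu : Y -> R)
  (x : X) (y : Y) : R := expR (- c x y / eps) * mu x * nu y.

Definition Jdual (eps : R) (c : X -> Y -> R) (mu : X -> R) (nu : Y -> R)
  (a : X -> R) (b : Y -> R) : R :=
  \sum_(x : X) a x * mu x + \sum_(y : Y) b y * nu y
  - eps * \sum_(x : X) \sum_(y : Y)
        Kmat eps c mu nu x y * (expR ((a x + b y) / eps) - 1).

Definition is_Jmaximizer (eps : R) (c : X -> Y -> R) (mu : X -> R) (nu : Y -> R)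
  (a : X -> R) (b : Y -> R) : Prop :=
  forall (a' : X -> R) (b' : Y -> R),
    Jdual eps c mu nu a' b' <= Jdual eps c mu nu a b.

Definition sk_u (K : X -> Y -> R) (mu : X -> R) (v : Y -> R) (x : X) : R :=
  mu x / \sum_(y : Y) K x y * v y.

Definition sk_vstep (K : X -> Y -> R) (mu : X -> R) (nu : Y -> R)
  (v : Y -> R) (y : Y) : R :=
  Num.min (v y) (nu y / \sum_(x : X) K x y * sk_u K mu v x).

Fixpoint sk_v (K : X -> Y -> R) (mu : X -> R) (nu : Y -> R) (v0 : Y -> R)
  (l : nat) : Y -> R :=
  match l with
  | 0 => v0
  | l'.+1 => sk_vstep K mu nu (sk_v K mu nu v0 l')
  end.

(* q^(l+1) = sum_{x,y} u^(l+1)(x) K(x,y) v^(l+1)(y),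
   with u^(l+1) = mu ./ (K v^(l)); q^(0) is not defined in the paper,
   we set it to 0 for totality (the theorem requires n >= 1). *)
Definition sk_q (K : X -> Y -> R) (mu : X -> R) (nu : Y -> R) (v0 : Y -> R)
  (n : nat) : R :=
  match n with
  | 0 => 0
  | l.+1 => \sum_(x : X) \sum_(y : Y)
              sk_u K mu (sk_v K mu nu v0 l) x * K x y * sk_v K mu nu v0 l.+1 y
  end.

End Sinkhorn.

From mathcomp Require Import all_boot all_order all_algebra.
From mathcomp Require Import reals sequences exp.
From mathcomp Require Import ring lra.
Import Order.TTheory GRing.Theory Num.Theory.
Local Open Scope ring_scope.

Set Implicit Arguments. Unset Strict Implicit.

(* At each temperature the Gibbs plan exp((alpha + beta - c)/eps) mu nu of a
   maximizer (alpha, beta) of J couples mu and nu.  Put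
   d = (beta2 - beta1)/eps1 and e = (alpha2 - alpha1)/eps1, so that
   (eps2/eps1) S2 = S1 + e + d for the two log-densities.  If the values of d had a
   gap of width 4 ln M + 2 ln N, the corresponding blocks of X x Y would carry
   S1-mass and S2-mass below 1/M; since mu and nu take values in (1/M)Z the block
   masses must then balance exactly, and comparing the heaviest entry of the
   upper block with the lower block contradicts the width of the gap.  Hence d
   oscillates by at most N (4 ln M + 2 ln N), and optimality of (alpha1, beta1)
   bounds the mean of e + d.

   For the iteration, every shift exp((beta2 + m)/eps2) of the eps2-scaling is
   a fixed point of the Sinkhorn map, and the map is monotone, so for m small
   enough it stays below all iterates.  The potential sum_x mu(x) ln (K v)(x)
   then drops by at least 1 - q at every step and is bounded below; the total
   drop is at most (eps1/eps2) (N (4 ln M + 2 ln N) + ln M), so q reaches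
   q_target within the stated number of steps. *)

Section RealFacts.
Variable R : realType.

Lemma subr_ln_ge (a b : R) : 0 < a -> 0 < b -> 1 - b / a <= ln a - ln b.
Proof.
move=> a0 b0; have ba0 : -1 < b / a - 1 by have := divr_gt0 b0 a0; lra.
have := le_ln1Dx ba0; rewrite addrC subrK ln_div ?posrE //; lra.
Qed.

Lemma expR_scale_le (d t : R) : 0 <= d <= 1 -> expR (d * t) <= d * expR t + (1 - d).
Proof.
move=> /andP [d0 d1]; set m := d * expR t + (1 - d).
have m0 : 0 < m by have := expR_gt0 t; rewrite /m; nra.
have em : expR (ln m) = m by rewrite lnK ?posrE.
have tangent_t := expR_ge1Dx (t - ln m); rewrite expRB em in tangent_t.
have tangent_0 := expR_ge1Dx (- ln m); rewrite expRN em in tangent_0.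
have mean : d * (expR t / m) + (1 - d) * m^-1 = 1.
  by apply: (@mulIf _ m); rewrite ?gt_eqF // mulrDl -!mulrA !mulVf ?gt_eqF // !mulr1 mul1r.
have := ler_wpM2l d0 tangent_t.
have : (1 - d) * (1 - ln m) <= (1 - d) * m^-1 by apply: ler_wpM2l => //; lra.
by move=> weighted_0 weighted_t; rewrite -em ler_expR; lra.
Qed.

Lemma expR_tangent_eq (m r : R) : 0 < m -> 0 <= r ->
  (forall u, u * m <= (expR u - 1) * r) -> m = r.
Proof.
move=> m0 r0 tangent; have [r_eq0|r_gt0] := eqVneq r 0.
  by have := tangent 1; rewrite r_eq0; lra.
have {r_gt0}r0 : 0 < r by rewrite lt_def r_gt0.
apply/eqP; apply: contraT => mr.
have lnrm : ln r - ln m != 0.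
  by rewrite subr_eq0; apply: contra mr => /eqP/ln_inj ->.
have := expR_gt1Dx lnrm; have := tangent (ln m - ln r).
rewrite !expRB !lnK ?posrE //.
have -> : (m / r - 1) * r = m - r by field; lra.
move=> tangent_lnmr exp_gt; have : 0 < m * (r / m - 1 - (ln r - ln m)).
  by apply: mulr_gt0 => //; lra.
have -> : m * (r / m - 1 - (ln r - ln m)) = r - m - m * (ln r - ln m).
  by field; exact: lt0r_neq0.
lra.
Qed.

Lemma ler_sum_term (I : finType) (P : pred I) (f : I -> R) i :
  P i -> (forall j, P j -> 0 <= f j) -> f i <= \sum_(j | P j) f j.
Proof.
move=> Pi f_ge0; rewrite (bigD1 i) //= lerDl.
by apply: sumr_ge0 => j /andP [Pj _]; exact: f_ge0.
Qed.

Lemma card_gt0_of_sumr_eq1 (I : finType) (f : I -> R) : \sum_i f i = 1 -> (0 < #|I|)%N.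
Proof.
move=> sum1; case: (pickP (@predT I)) => [i _|I0]; first by apply/card_gt0P; exists i.
by move: sum1; rewrite big_pred0 // => /esym/eqP; rewrite oner_eq0.
Qed.

Lemma exists_ge_mean (I : finType) (P : pred I) (f : I -> R) (F K : R) :
  0 < F -> 0 < K -> #|I|%:R <= K -> F <= \sum_(i | P i) f i ->
  exists2 i, P i & F / K <= f i.
Proof.
move=> F0 K0 IK Fsum.
case: (boolP [exists i, P i && (F / K <= f i)]) => [/existsP [i /andP []] | /existsPn small].
  by exists i.
have [i0 _ | I0] := pickP (@predT I); last first.
  suff : \sum_(i | P i) f i = 0 by lra.
  by apply: big_pred0 => i; have := I0 i.
have : \sum_i (if P i then f i else 0) < \sum_(i : I) F / K.
  apply: ltr_sum => [|i _]; first by apply/hasP; exists i0; rewrite ?mem_index_enum.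
  have := small i; case: (P i) => /=; first by rewrite -ltNge.
  by move=> _; exact: divr_gt0.
rewrite -big_mkcond sumr_const -mulr_natl.
have : #|I|%:R * (F / K) <= K * (F / K) by apply: ler_wpM2r => //; exact/ltW/divr_gt0.
have -> : K * (F / K) = F by rewrite mulrC divfK ?gt_eqF.
move=> card_le sum_lt; lra.
Qed.

Lemma natr_eq_of_subr_lt1 (m n : nat) :
  -1 < m%:R - n%:R :> R -> m%:R - n%:R < 1 :> R -> m = n.
Proof.
move=> lo hi; apply/eqP; rewrite eqn_leq; apply/andP.
by split; rewrite -ltnS -(ltr_nat R) -natr1; lra.
Qed.

End RealFacts.

Section DualObjective.
Variables (R : realType) (X Y : finType).
Implicit Types (eps : R) (c : X -> Y -> R) (mu : X -> R) (nu : Y -> R).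
Implicit Types (a : X -> R) (b : Y -> R).

(* The plan diag(exp(a/eps)) K_eps diag(exp(b/eps)) of the potentials (a, b). *)
Definition Jplan eps c mu nu a b x y : R :=
  mu x * nu y * expR ((a x + b y - c x y) / eps).

Lemma JdualE eps c mu nu a b : eps != 0 ->
  Jdual eps c mu nu a b = \sum_x a x * mu x + \sum_y b y * nu y
    - eps * (\sum_x \sum_y Jplan eps c mu nu a b x y - \sum_x \sum_y Kmat eps c mu nu x y).
Proof.
move=> eps_neq0; congr (_ - eps * _).
rewrite -sumrB; apply: eq_bigr => x _; rewrite -sumrB; apply: eq_bigr => y _.
rewrite /Jplan /Kmat.
have -> : (a x + b y - c x y) / eps = - c x y / eps + (a x + b y) / eps by field.
by rewrite expRD; ring.
Qed.

Lemma Jdual_shift eps c mu nu a b x0 t : eps != 0 ->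
  Jdual eps c mu nu (fun x => a x + (if x == x0 then t else 0)) b
  = Jdual eps c mu nu a b + t * mu x0
    - eps * (expR (t / eps) - 1) * \sum_y Jplan eps c mu nu a b x0 y.
Proof.
move=> eps_neq0; rewrite !JdualE //.
have at_x0 (F : X -> R) : \sum_x (if x == x0 then F x else 0) = F x0.
  by rewrite (bigD1 x0) //= eqxx big1 ?addr0 // => x /negbTE ->.
have mean_shift : \sum_x (a x + (if x == x0 then t else 0)) * mu x
    = \sum_x a x * mu x + t * mu x0.
  rewrite -(at_x0 (fun x => t * mu x)) -big_split; apply: eq_bigr => x _.
  by case: eqP => _ /=; ring.
have plan_shift :
    \sum_x \sum_y Jplan eps c mu nu (fun x => a x + (if x == x0 then t else 0)) b x y
    = \sum_x \sum_y Jplan eps c mu nu a b x y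
      + (expR (t / eps) - 1) * \sum_y Jplan eps c mu nu a b x0 y.
  rewrite -(at_x0 (fun x => (expR (t / eps) - 1) * \sum_y Jplan eps c mu nu a b x y)).
  rewrite -big_split; apply: eq_bigr => x _; rewrite /Jplan.
  case: eqP => _ /=; last by under eq_bigr do rewrite addr0; rewrite addr0.
  rewrite mulr_sumr -big_split /=; apply: eq_bigr => y _.
  have -> : (a x + t + b y - c x y) / eps = t / eps + (a x + b y - c x y) / eps by field.
  by rewrite expRD; ring.
by rewrite mean_shift plan_shift; ring.
Qed.

Lemma Jmaximizer_row_sum eps c mu nu a b x : 0 < eps -> 0 < mu x ->
  (forall y, 0 <= nu y) -> is_Jmaximizer eps c mu nu a b ->
  \sum_y Jplan eps c mu nu a b x y = mu x.
Proof.
move=> eps0 mu0 nu0 opt; have eps_neq0 := lt0r_neq0 eps0.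
apply/esym/expR_tangent_eq => // [|u].
  apply: sumr_ge0 => y _; rewrite /Jplan.
  by apply: mulr_ge0; [apply: mulr_ge0 => //; exact: ltW | exact: expR_ge0].
have := opt (fun x' => a x' + (if x' == x then eps * u else 0)) b.
rewrite Jdual_shift // (_ : eps * u / eps = u); last by field.
by move=> shift_le; rewrite -subr_le0 -(pmulr_rle0 _ eps0); lra.
Qed.

Lemma Jdual_transpose eps c mu nu a b :
  Jdual eps c mu nu a b = Jdual eps (fun y x => c x y) nu mu b a.
Proof.
rewrite /Jdual exchange_big /=; congr (_ - eps * _); first by rewrite addrC.
apply: eq_bigr => y _; apply: eq_bigr => x _.
by rewrite /Kmat (addrC (b y)); ring.
Qed.

Lemma Jmaximizer_mean_le eps c mu nu a1 b1 a2 b2 : 0 < eps ->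
  is_Jmaximizer eps c mu nu a1 b1 ->
  \sum_x \sum_y Jplan eps c mu nu a1 b1 x y = 1 ->
  \sum_x \sum_y Jplan eps c mu nu a2 b2 x y <= 1 ->
  \sum_x (a2 x - a1 x) * mu x + \sum_y (b2 y - b1 y) * nu y <= 0.
Proof.
move=> eps0 opt mass1 mass2; have := opt a2 b2; rewrite !JdualE ?gt_eqF // mass1.
have -> : \sum_x (a2 x - a1 x) * mu x = \sum_x a2 x * mu x - \sum_x a1 x * mu x.
  by rewrite -sumrB; apply: eq_bigr => x _; rewrite mulrBl.
have -> : \sum_y (b2 y - b1 y) * nu y = \sum_y b2 y * nu y - \sum_y b1 y * nu y.
  by rewrite -sumrB; apply: eq_bigr => y _; rewrite mulrBl.
have : eps * (\sum_x \sum_y Jplan eps c mu nu a2 b2 x y - 1) <= 0.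
  by rewrite pmulr_rle0 // subr_le0.
lra.
Qed.

End DualObjective.

Lemma Jmaximizer_col_sum (R : realType) (X Y : finType) (eps : R) (c : X -> Y -> R)
  (mu : X -> R) (nu : Y -> R) (a : X -> R) (b : Y -> R) y : 0 < eps -> 0 < nu y ->
  (forall x, 0 <= mu x) -> is_Jmaximizer eps c mu nu a b ->
  \sum_x Jplan eps c mu nu a b x y = nu y.
Proof.
move=> eps0 nu0 mu0 opt.
have opt' : is_Jmaximizer eps (fun y x => c x y) nu mu b a.
  by move=> b' a'; have := opt a' b'; rewrite !(Jdual_transpose _ c).
rewrite -(Jmaximizer_row_sum eps0 nu0 mu0 opt').
by apply: eq_bigr => x _; rewrite /Jplan (addrC (b y)); ring.
Qed.

Section BlockMass.
Variables (V : zmodType) (X Y : finType).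

Definition block_mass (P : X -> Y -> V) (A : pred X) (B : pred Y) : V :=
  \sum_(x | A x) \sum_(y | B y) P x y.

Lemma coupling_block_diff (P : X -> Y -> V) (mu : X -> V) (nu : Y -> V) A B :
  (forall x, \sum_y P x y = mu x) -> (forall y, \sum_x P x y = nu y) ->
  block_mass P A B - block_mass P (predC A) (predC B)
  = \sum_(y | B y) nu y - \sum_(x | ~~ A x) mu x.
Proof.
move=> row col.
have -> : \sum_(y | B y) nu y = block_mass P A B + block_mass P (predC A) B.
  rewrite /block_mass (exchange_big _ _ _ A) (exchange_big _ _ _ (predC A)).
  by rewrite -big_split; apply: eq_bigr => y _; rewrite -col [LHS](bigID A).
have -> : \sum_(x | ~~ A x) mu x
    = block_mass P (predC A) B + block_mass P (predC A) (predC B).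
  by rewrite /block_mass -big_split; apply: eq_bigr => x _; rewrite -row [LHS](bigID B).
by rewrite addrKA.
Qed.

End BlockMass.

Lemma exists_block_entry_ge (R : realType) (X Y : finType) (P : X -> Y -> R)
    (A : pred X) (B : pred Y) (F K : R) :
  0 < F -> 0 < K -> #|X|%:R <= K -> #|Y|%:R <= K -> F <= block_mass P A B ->
  exists x y, [/\ A x, B y & F / K / K <= P x y].
Proof.
move=> F0 K0 XK YK FP.
have [x Ax Fx] := exists_ge_mean F0 K0 XK FP.
have [y By Fy] := exists_ge_mean (divr_gt0 F0 K0) K0 YK Fx.
by exists x, y.
Qed.

Lemma ler_block_mass_entry (R : realType) (X Y : finType) (P : X -> Y -> R)
    (A : pred X) (B : pred Y) x y :
  (forall x y, 0 <= P x y) -> A x -> B y -> P x y <= block_mass P A B.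
Proof.
move=> P0 Ax By.
have row_le : P x y <= \sum_(y' | B y') P x y' by apply: ler_sum_term.
apply: le_trans row_le _.
by apply: (ler_sum_term (f := fun x' => \sum_(y' | B y') P x' y')) => // x' _; exact: sumr_ge0.
Qed.

Lemma spread_le_of_no_gap (R : realType) (I : finType) (f : I -> R) (g : R) :
  0 <= g ->
  (forall a, (exists i, f i <= a) -> (exists i, a + g < f i) ->
     exists i, a < f i <= a + g) ->
  forall i j, f i - f j <= (#|I|.-1)%:R * g.
Proof.
move=> g0 no_gap i j.
pose below k := [set i' | f i' <= f j + k%:R * g].
have step k : f j + k.+1%:R * g = f j + k%:R * g + g by rewrite -natr1 mulrDl mul1r addrA.
have grow k : (forall i', f i' <= f j + k%:R * g) \/ (k < #|below k|)%N.
  elim: k => [|k [all_below|IH]].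
  - by right; apply/card_gt0P; exists j; rewrite inE mul0r addr0.
  - by left => i'; rewrite step; have := all_below i'; lra.
  - have kg0 : 0 <= k%:R * g by exact: mulr_ge0.
    have [/existsP [ih above] | /existsPn none_above] :=
      boolP [exists i', f j + k%:R * g + g < f i'].
    + right; have [||im /andP [im_lo im_hi]] := no_gap (f j + k%:R * g).
      * by exists j; lra.
      * by exists ih.
      apply: leq_ltn_trans IH (proper_card _); apply/properP; split.
        by apply/subsetP => i'; rewrite !inE step; lra.
      by exists im; rewrite inE ?step // -ltNge.
    + by left => i'; rewrite step; have := none_above i'; rewrite -leNgt.
have i_below : i \in below #|I|.-1.
  have [all_below|] := grow #|I|.-1; first by rewrite inE.
  rewrite prednK; last by apply/card_gt0P; exists i.
  move=> full; have -> : below #|I|.-1 = setT.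
    by apply/eqP; rewrite eqEcard subsetT cardsT.
  by rewrite inE.
by move: i_below; rewrite inE; lra.
Qed.

Section DualComparison.
Variables (R : realType) (X Y : finType) (c : X -> Y -> R) (mu : X -> R) (nu : Y -> R).
Hypotheses (mu_ge0 : forall x, 0 <= mu x) (nu_ge0 : forall y, 0 <= nu y).
Hypotheses (mu_sum1 : \sum_x mu x = 1) (nu_sum1 : \sum_y nu y = 1).

Lemma Jplan_mass_le1 eps eps' a b : 0 < eps' -> eps' <= eps ->
  \sum_x \sum_y Jplan eps' c mu nu a b x y = 1 ->
  \sum_x \sum_y Jplan eps c mu nu a b x y <= 1.
Proof.
move=> eps'0 eps'_le mass1; have eps0 : 0 < eps by exact: lt_le_trans eps'_le.
set dl := eps' / eps.
have dl01 : 0 <= dl <= 1.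
  by rewrite divr_ge0 ?(ltW eps'0) ?(ltW eps0) //= ler_pdivrMr // mul1r.
have mass_mu_nu : \sum_x \sum_y mu x * nu y = 1.
  by rewrite -mu_sum1; apply: eq_bigr => x _; rewrite -mulr_sumr nu_sum1 mulr1.
have -> : 1 = dl * \sum_x \sum_y Jplan eps' c mu nu a b x y
              + (1 - dl) * \sum_x \sum_y mu x * nu y by rewrite mass1 mass_mu_nu; ring.
rewrite !mulr_sumr -big_split /=; apply: ler_sum => x _.
rewrite !mulr_sumr -big_split /=; apply: ler_sum => y _.
rewrite /Jplan (_ : (a x + b y - c x y) / eps = dl * ((a x + b y - c x y) / eps')).
  set S := (a x + b y - c x y) / eps'.
  have -> : dl * (mu x * nu y * expR S) + (1 - dl) * (mu x * nu y)
      = mu x * nu y * (dl * expR S + (1 - dl)) by ring.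
  by apply: ler_wpM2l; [exact: mulr_ge0 | exact: expR_scale_le].
by rewrite /dl; field; rewrite ?gt_eqF.
Qed.

End DualComparison.

Section SinkhornPotential.
Variables (R : realType) (X Y : finType) (K : X -> Y -> R) (mu : X -> R) (nu : Y -> R).
Hypotheses (K_gt0 : forall x y, 0 < K x y) (mu_gt0 : forall x, 0 < mu x).
Hypotheses (nu_ge0 : forall y, 0 <= nu y) (mu_sum1 : \sum_x mu x = 1).
Hypotheses (X_nonempty : (0 < #|X|)%N) (Y_nonempty : (0 < #|Y|)%N).

Definition Kv (v : Y -> R) x := \sum_y K x y * v y.

(* [sk_vstep K mu nu v y] unfolds to [Num.min (v y) (sk_map v y)]. *)
Definition sk_map (v : Y -> R) y := nu y / \sum_x K x y * sk_u K mu v x.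

Lemma Kv_gt0 v x : (forall y, 0 < v y) -> 0 < Kv v x.
Proof.
move=> v0; have /card_gt0P [y _] := Y_nonempty.
apply: lt_le_trans (mulr_gt0 (K_gt0 x y) (v0 y)) _.
by apply: ler_sum_term => // y' _; exact/ltW/mulr_gt0.
Qed.

Lemma Kv_le v v' x : (forall y, v y <= v' y) -> Kv v x <= Kv v' x.
Proof. by move=> le_v; apply: ler_sum => y _; apply: ler_wpM2l; [exact/ltW | exact: le_v]. Qed.

Lemma sk_map_le v v' y : (forall y, 0 < v y) -> (forall y, v y <= v' y) ->
  sk_map v y <= sk_map v' y.
Proof.
move=> v0 le_v; have v'0 y' : 0 < v' y' := lt_le_trans (v0 y') (le_v y').
have u_gt0 w x : (forall y, 0 < w y) -> 0 < sk_u K mu w x.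
  by move=> w0; rewrite divr_gt0 ?Kv_gt0.
have KTu_gt0 w : (forall y, 0 < w y) -> 0 < \sum_x K x y * sk_u K mu w x.
  move=> w0; have /card_gt0P [x _] := X_nonempty.
  apply: lt_le_trans (mulr_gt0 (K_gt0 x y) (u_gt0 w x w0)) _.
  by apply: ler_sum_term => // x' _; exact/ltW/mulr_gt0/u_gt0.
rewrite /sk_map; apply: ler_wpM2l => //; rewrite lef_pV2 ?posrE ?KTu_gt0 //.
apply: ler_sum => x _; apply: ler_wpM2l; first exact/ltW.
apply: ler_wpM2l; first exact/ltW.
by rewrite lef_pV2 ?posrE ?Kv_gt0 // Kv_le.
Qed.

Section Barrier.
Variables (w v0 : Y -> R).
Hypotheses (w_gt0 : forall y, 0 < w y) (w_sub : forall y, w y <= sk_map w y).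
Hypothesis w_le_v0 : forall y, w y <= v0 y.

Lemma sk_v_ge_barrier l y : w y <= sk_v K mu nu v0 l y.
Proof.
elim: l y => [|l IH] y //=; rewrite /sk_vstep le_min IH /=.
exact: le_trans (w_sub y) (sk_map_le y w_gt0 IH).
Qed.

Lemma sk_v_gt0 l y : 0 < sk_v K mu nu v0 l y.
Proof. exact: lt_le_trans (w_gt0 y) (sk_v_ge_barrier l y). Qed.

Lemma sk_q_succE l : sk_q K mu nu v0 l.+1
  = \sum_x mu x * (Kv (sk_v K mu nu v0 l.+1) x / Kv (sk_v K mu nu v0 l) x).
Proof.
apply: eq_bigr => x _; rewrite /sk_u -/(Kv _ x).
transitivity (mu x / Kv (sk_v K mu nu v0 l) x * Kv (sk_v K mu nu v0 l.+1) x); last by ring.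
by rewrite {3}/Kv mulr_sumr; apply: eq_bigr => y _; ring.
Qed.

Definition sk_potential l := \sum_x mu x * ln (Kv (sk_v K mu nu v0 l) x).

Lemma sk_q_deficit_le l : 1 - sk_q K mu nu v0 l.+1 <= sk_potential l - sk_potential l.+1.
Proof.
rewrite sk_q_succE /sk_potential -{1}mu_sum1 -!sumrB; apply: ler_sum => x _.
have := subr_ln_ge (Kv_gt0 x (sk_v_gt0 l)) (Kv_gt0 x (sk_v_gt0 l.+1)).
by move=> /(ler_wpM2l (ltW (mu_gt0 x))); rewrite !mulrBr mulr1.
Qed.

Lemma sk_deficit_sum_le n : \sum_(l < n) (1 - sk_q K mu nu v0 l.+1)
  <= \sum_x mu x * (ln (Kv v0 x) - ln (Kv w x)).
Proof.
have drop_le :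
    \sum_(0 <= l < n) (1 - sk_q K mu nu v0 l.+1) <= sk_potential 0 - sk_potential n.
  elim: n => [|n IH]; first by rewrite big_geq // subrr.
  rewrite big_nat_recr //; apply: le_trans (lerD IH (sk_q_deficit_le n)) _.
  by rewrite addrA subrK.
rewrite -(big_mkord xpredT (fun l => 1 - sk_q K mu nu v0 l.+1)).
apply: le_trans drop_le _.
have -> : \sum_x mu x * (ln (Kv v0 x) - ln (Kv w x))
    = sk_potential 0 - \sum_x mu x * ln (Kv w x).
  by rewrite /sk_potential -sumrB; apply: eq_bigr => x _; rewrite mulrBr.
rewrite lerD2l lerN2; apply: ler_sum => x _; apply: ler_wpM2l; first exact/ltW.
rewrite ler_ln ?posrE ?Kv_gt0 //; last exact: sk_v_gt0.
by apply: Kv_le => y; exact: sk_v_ge_barrier.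
Qed.

End Barrier.

End SinkhornPotential.

Section GibbsKernel.
Variables (R : realType) (X Y : finType) (eps : R) (c : X -> Y -> R).
Variables (mu : X -> R) (nu : Y -> R) (a : X -> R) (b : Y -> R).
Hypothesis eps_neq0 : eps != 0.

Lemma Kmat_gt0 x y : 0 < mu x -> 0 < nu y -> 0 < Kmat eps c mu nu x y.
Proof. by move=> mu0 nu0; rewrite /Kmat !mulr_gt0 ?expR_gt0. Qed.

Lemma Kv_Kmat_expR m x :
  Kv (Kmat eps c mu nu) (fun y => expR ((b y + m) / eps)) x
  = expR ((m - a x) / eps) * \sum_y Jplan eps c mu nu a b x y.
Proof.
rewrite /Kv mulr_sumr; apply: eq_bigr => y _; rewrite /Kmat /Jplan.
have -> : - c x y / eps = (m - a x) / eps + (a x + b y - c x y) / eps - (b y + m) / eps.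
  by field.
by rewrite expRB expRD; field; rewrite gt_eqF ?expR_gt0.
Qed.

Lemma KTv_Kmat_expR m y :
  \sum_x Kmat eps c mu nu x y * expR ((a x + m) / eps)
  = expR ((m - b y) / eps) * \sum_x Jplan eps c mu nu a b x y.
Proof.
rewrite mulr_sumr; apply: eq_bigr => x _; rewrite /Kmat /Jplan.
have -> : - c x y / eps = (m - b y) / eps + (a x + b y - c x y) / eps - (a x + m) / eps.
  by field.
by rewrite expRB expRD; field; rewrite gt_eqF ?expR_gt0.
Qed.

Lemma sk_map_Kmat_fixed m y :
  (forall x, \sum_y Jplan eps c mu nu a b x y = mu x) ->
  (forall y, \sum_x Jplan eps c mu nu a b x y = nu y) ->
  (forall x, 0 < mu x) -> 0 < nu y ->
  sk_map (Kmat eps c mu nu) mu nu (fun y => expR ((b y + m) / eps)) y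
  = expR ((b y + m) / eps).
Proof.
move=> row col mu0 nu0.
have u_eq x : sk_u (Kmat eps c mu nu) mu (fun y => expR ((b y + m) / eps)) x
    = expR ((a x + - m) / eps).
  rewrite /sk_u -/(Kv _ _ x) Kv_Kmat_expR row invfM mulrCA divff ?gt_eqF // mulr1.
  by rewrite -expRN; congr expR; field.
rewrite /sk_map (eq_bigr _ (fun x _ => congr1 _ (u_eq x))) KTv_Kmat_expR col.
by rewrite invfM mulrCA divff ?gt_eqF // mulr1 -expRN; congr expR; field.
Qed.

End GibbsKernel.

Lemma exists_ge_of_deficit_sum_le (R : realType) (q : nat -> R) (C qt : R) :
  qt < 1 -> 0 <= C -> (forall n, \sum_(l < n) (1 - q l.+1) <= C) ->
  exists n, (1 <= n)%N /\ n%:R <= C / (1 - qt) + 1 /\ qt <= q n.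
Proof.
move=> qt1 C0 deficit_le; have qt1' : 0 < 1 - qt by lra.
set n0 := (Num.truncn (C / (1 - qt))).+1.
have n0_gt : C / (1 - qt) < n0%:R by exact: truncnS_gt.
have [/existsP [k /andP [k0 qk]] | /existsPn none] :=
  boolP [exists k : 'I_n0.+1, (0 < k)%N && (qt <= q k)].
  exists k; split => //; split => //; apply: le_trans (_ : n0%:R <= _).
    by rewrite ler_nat -ltnS.
  by rewrite /n0 -natr1 lerD2r truncn_le divr_ge0 // ltW.
exfalso; have := deficit_le n0.
have : n0%:R * (1 - qt) <= \sum_(l < n0) (1 - q l.+1).
  rewrite (_ : n0%:R * _ = \sum_(l < n0) (1 - qt)); last first.
    by rewrite sumr_const card_ord mulr_natl.
  apply: ler_sum => l _.
  have l_lt : (l.+1 < n0.+1)%N by rewrite ltnS ltn_ord.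
  by have := none (Ordinal l_lt); rewrite /= -ltNge; lra.
by rewrite ltr_pdivrMr // in n0_gt; lra.
Qed.

Section IntegralMarginals.
Variables (R : realType) (X Y : finType) (N M : nat) (r : X -> nat) (s : Y -> nat).
Variables (mu : X -> R) (nu : Y -> R).
Hypotheses (XN : (#|X| <= N)%N) (YN : (#|Y| <= N)%N) (M_gt0 : (0 < M)%N).
Hypotheses (r_gt0 : forall x, (0 < r x)%N) (s_gt0 : forall y, (0 < s y)%N).
Hypotheses (muE : forall x, mu x = (r x)%:R / M%:R) (nuE : forall y, nu y = (s y)%:R / M%:R).
Hypotheses (mu_sum1 : \sum_x mu x = 1) (nu_sum1 : \sum_y nu y = 1).
Implicit Types (S : X -> Y -> R) (A : pred X) (B : pred Y).

Let X_nonempty : (0 < #|X|)%N. Proof. exact: card_gt0_of_sumr_eq1 mu_sum1. Qed.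
Let Y_nonempty : (0 < #|Y|)%N. Proof. exact: card_gt0_of_sumr_eq1 nu_sum1. Qed.
Let M_gt0R : 0 < M%:R :> R. Proof. by rewrite ltr0n. Qed.

Let invM_le_natr_divM k : (0 < k)%N -> M%:R^-1 <= k%:R / M%:R :> R.
Proof. by move=> k0; rewrite -[leLHS]mul1r ler_pM2r ?invr_gt0 // ler1n. Qed.

Lemma mu_ge_invM x : M%:R^-1 <= mu x. Proof. by rewrite muE invM_le_natr_divM. Qed.
Lemma nu_ge_invM y : M%:R^-1 <= nu y. Proof. by rewrite nuE invM_le_natr_divM. Qed.

Lemma mu_gt0 x : 0 < mu x.
Proof. by apply: lt_le_trans (mu_ge_invM x); rewrite invr_gt0. Qed.
Lemma nu_gt0 y : 0 < nu y.
Proof. by apply: lt_le_trans (nu_ge_invM y); rewrite invr_gt0. Qed.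

Lemma mu_le1 x : mu x <= 1.
Proof. by rewrite -mu_sum1 (ler_sum_term (P := predT)) // => x' _; exact/ltW/mu_gt0. Qed.
Lemma nu_le1 y : nu y <= 1.
Proof. by rewrite -nu_sum1 (ler_sum_term (P := predT)) // => y' _; exact/ltW/nu_gt0. Qed.

Definition plan (S : X -> Y -> R) x y := mu x * nu y * expR (S x y).

Lemma plan_gt0 S x y : 0 < plan S x y.
Proof. by rewrite /plan !mulr_gt0 ?mu_gt0 ?nu_gt0 ?expR_gt0. Qed.

Lemma plan_ge0 S x y : 0 <= plan S x y.
Proof. exact/ltW/plan_gt0. Qed.

Lemma plan_row_S_le S x y : \sum_y' plan S x y' = mu x -> S x y <= ln M%:R.
Proof.
move=> row; have : plan S x y <= mu x.
  by rewrite -row (ler_sum_term (P := predT)) // => y' _; exact: plan_ge0.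
rewrite /plan -mulrA ger_pMr ?mu_gt0 // => le1.
have : M%:R^-1 * expR (S x y) <= 1.
  by apply: le_trans le1; rewrite ler_wpM2r ?expR_ge0 ?nu_ge_invM.
rewrite mulrC -ler_pdivlMr ?invr_gt0 // div1r invrK => le_M.
by rewrite -ler_expR lnK ?posrE.
Qed.

Lemma plan_block_lt_invM S A B y' : ~~ B y' ->
  (forall x y, A x -> B y -> S x y <= - ln M%:R) -> block_mass (plan S) A B < M%:R^-1.
Proof.
move=> By' S_le; have eM : expR (- ln M%:R) = M%:R^-1 :> R by rewrite expRN lnK ?posrE.
have prod_sum : \sum_(x | A x) \sum_(y | B y) mu x * nu y
    = (\sum_(x | A x) mu x) * (\sum_(y | B y) nu y).
  by rewrite mulr_suml; apply: eq_bigr => x _; rewrite mulr_sumr.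
have mass_le : block_mass (plan S) A B
    <= M%:R^-1 * ((\sum_(x | A x) mu x) * (\sum_(y | B y) nu y)).
  rewrite -prod_sum mulr_sumr; apply: ler_sum => x Ax.
  rewrite mulr_sumr; apply: ler_sum => y By.
  rewrite /plan [leRHS]mulrC; apply: ler_wpM2l; first by rewrite mulr_ge0 ?ltW ?mu_gt0 ?nu_gt0.
  by rewrite -eM ler_expR S_le.
have muA : \sum_(x | A x) mu x <= 1.
  by rewrite -mu_sum1 [leRHS](bigID A) lerDl sumr_ge0 // => x _; exact/ltW/mu_gt0.
have nuB0 : 0 <= \sum_(y | B y) nu y by rewrite sumr_ge0 // => y _; exact/ltW/nu_gt0.
have nuB : \sum_(y | B y) nu y < 1.
  rewrite -nu_sum1 [ltRHS](bigID B) ltrDl; apply: lt_le_trans (nu_gt0 y') _.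
  by apply: ler_sum_term => // y _; exact/ltW/nu_gt0.
apply: le_lt_trans mass_le _; rewrite gtr_pMr ?invr_gt0 //.
exact: le_lt_trans (ler_piMl nuB0 muA) nuB.
Qed.

(* Both differences of block masses equal nu(B) - mu(~A), a multiple of 1/M. *)
Lemma coupling_block_balance (P1 P2 : X -> Y -> R) A B :
  (forall x, \sum_y P1 x y = mu x) -> (forall y, \sum_x P1 x y = nu y) ->
  (forall x, \sum_y P2 x y = mu x) -> (forall y, \sum_x P2 x y = nu y) ->
  (forall x y, 0 <= P1 x y) -> (forall x y, 0 <= P2 x y) ->
  block_mass P1 A B < M%:R^-1 -> block_mass P2 (predC A) (predC B) < M%:R^-1 ->
  block_mass P1 (predC A) (predC B) = block_mass P1 A B /\
  block_mass P2 A B = block_mass P2 (predC A) (predC B).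
Proof.
move=> row1 col1 row2 col2 P1_ge0 P2_ge0 small1 small2.
have D1 := coupling_block_diff A B row1 col1.
have D2 := coupling_block_diff A B row2 col2.
have mass_ge0 (P : X -> Y -> R) A' B' :
    (forall x y, 0 <= P x y) -> 0 <= block_mass P A' B'.
  by move=> P0; apply: sumr_ge0 => x _; apply: sumr_ge0 => y _.
have ge0_1 := mass_ge0 _ (predC A) (predC B) P1_ge0.
have ge0_2 := mass_ge0 _ A B P2_ge0.
set D := \sum_(y | B y) nu y - \sum_(x | ~~ A x) mu x in D1 D2 *.
have DM : D * M%:R = (\sum_(y | B y) s y)%:R - (\sum_(x | ~~ A x) r x)%:R.
  rewrite /D mulrBl !natr_sum !mulr_suml.
  by congr (_ - _); apply: eq_bigr => z _; rewrite ?nuE ?muE divfK ?gt_eqF.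
suff D0 : D = 0 by split; lra.
have lo : -1 < D * M%:R by rewrite -ltr_pdivrMr // mulN1r; lra.
have hi : D * M%:R < 1 by rewrite -ltr_pdivlMr // div1r; lra.
have sums_eq : (\sum_(y | B y) s y = \sum_(x | ~~ A x) r x)%N.
  by apply: (@natr_eq_of_subr_lt1 R); rewrite -DM.
by move: DM; rewrite sums_eq subrr => /eqP; rewrite mulf_eq0 (gt_eqF M_gt0R) orbF => /eqP.
Qed.

Lemma S_le_of_plan_le S x y F : 0 < F -> plan S x y <= F ->
  S x y <= ln F + 2 * ln M%:R.
Proof.
move=> F0 le_F; rewrite -ler_expR mulr_natl mulr2n !expRD !lnK ?posrE //.
have mn : M%:R^-1 * M%:R^-1 <= mu x * nu y.
  by rewrite ler_pM ?invr_ge0 ?ler0n ?mu_ge_invM ?nu_ge_invM.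
have scaled_le : M%:R^-1 * M%:R^-1 * expR (S x y) <= F.
  by apply: le_trans le_F; rewrite ler_wpM2r ?expR_ge0.
have -> : expR (S x y) = M%:R * M%:R * (M%:R^-1 * M%:R^-1 * expR (S x y)).
  by field; rewrite gt_eqF.
rewrite [leRHS]mulrC.
by apply: ler_wpM2l scaled_le; rewrite mulr_ge0 ?ler0n.
Qed.

Lemma plan_block_shift S1 S2 A B k :
  (forall x y, A x -> B y -> S2 x y <= S1 x y + k) ->
  block_mass (plan S2) A B <= expR k * block_mass (plan S1) A B.
Proof.
move=> S_le; rewrite mulr_sumr; apply: ler_sum => x Ax.
rewrite mulr_sumr; apply: ler_sum => y By.
rewrite /plan [leRHS]mulrCA; apply: ler_wpM2l; first by rewrite mulr_ge0 ?ltW ?mu_gt0 ?nu_gt0.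
by rewrite -expRD ler_expR addrC S_le.
Qed.

(* Some entry of the upper block carries 1/N^2 of its S1-mass; its S2-mass is at
   most the S2-mass of the lower block, where S2 <= S1 + k. *)
Lemma block_separation_lt (S1 S2 : X -> Y -> R) (dl g : R) A B :
  0 < dl <= 1 ->
  (forall x y, A x -> B y -> S1 x y + g < dl * S2 x y) ->
  (forall x y, ~~ A x -> ~~ B y -> dl * S2 x y < S1 x y - g) ->
  block_mass (plan S1) (predC A) (predC B) = block_mass (plan S1) A B ->
  block_mass (plan S2) A B = block_mass (plan S2) (predC A) (predC B) ->
  0 < block_mass (plan S1) A B ->
  g < ln N%:R + ln M%:R.
Proof.
move=> /andP [dl0 dl1] sep_up sep_lo bal1 bal2 F0.
set F := block_mass (plan S1) A B in bal1 F0 *.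
have N0 : 0 < N%:R :> R by rewrite ltr0n (leq_trans X_nonempty XN).
have lnM0 : 0 <= ln M%:R :> R by rewrite ln_ge0 // ler1n.
have [x0 [y0 [Ax0 By0 heavy]]] : exists x y, [/\ A x, B y & F / N%:R / N%:R <= plan S1 x y].
  by apply: exists_block_entry_ge; rewrite ?ler_nat.
have w0 : 0 < mu x0 * nu y0 by rewrite mulr_gt0 ?mu_gt0 ?nu_gt0.
set lw := ln (mu x0 * nu y0).
have lw_le0 : lw <= 0.
  by apply: ln_le0; rewrite mulr_ile1 ?(ltW (mu_gt0 _)) ?(ltW (nu_gt0 _)) ?mu_le1 ?nu_le1.
have plan_entry S : plan S x0 y0 = expR (lw + S x0 y0) by rewrite expRD lnK.
have entry_lo : ln F - 2 * ln N%:R <= lw + S1 x0 y0.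
  rewrite -ler_expR -plan_entry expRB mulr_natl mulr2n expRD !lnK ?posrE //.
  by rewrite invfM mulrA.
pose k := ((1 - dl) * (ln F + 2 * ln M%:R) - g) / dl.
have kE : dl * k = (1 - dl) * (ln F + 2 * ln M%:R) - g by rewrite /k; field; rewrite gt_eqF.
have lower_shift x y : ~~ A x -> ~~ B y -> S2 x y <= S1 x y + k.
  move=> Ax By; rewrite -(ler_pM2l dl0) mulrDr kE.
  have : S1 x y <= ln F + 2 * ln M%:R.
    apply: S_le_of_plan_le => //; rewrite -bal1.
    by apply: ler_block_mass_entry => // ? ?; exact: plan_ge0.
  move=> /(ler_wpM2l (_ : 0 <= 1 - dl)) S1_le.
  have := sep_lo x y Ax By; have := S1_le ltac:(lra); lra.
have entry_hi : lw + S2 x0 y0 <= k + ln F.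
  rewrite -ler_expR -plan_entry expRD lnK ?posrE // -bal1.
  apply: le_trans (plan_block_shift lower_shift); rewrite -bal2.
  by apply: ler_block_mass_entry => // ? ?; exact: plan_ge0.
have : dl * (lw + S2 x0 y0) <= dl * (k + ln F) by rewrite ler_pM2l.
have dl_lnM : 0 <= dl * ln M%:R by rewrite mulr_ge0 // ltW.
have dl_lw : (1 - dl) * lw <= 0 by rewrite mulr_ge0_le0 //; lra.
have := sep_up x0 y0 Ax0 By0; rewrite !mulrDr kE; lra.
Qed.

Definition gap_width : R := 4 * ln M%:R + 2 * ln N%:R.

Lemma gap_width_ge0 : 0 <= gap_width.
Proof.
have := @ln_ge0 R M%:R; have := @ln_ge0 R N%:R.
rewrite !ler1n (leq_trans X_nonempty XN) M_gt0 /gap_width; lra.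
Qed.

Section PotentialGap.
Variables (S1 S2 : X -> Y -> R) (e : X -> R) (d : Y -> R) (dl : R).
Hypotheses (dl_gt0 : 0 < dl) (dl_le1 : dl <= 1).
Hypotheses (row1 : forall x, \sum_y plan S1 x y = mu x).
Hypotheses (col1 : forall y, \sum_x plan S1 x y = nu y).
Hypotheses (row2 : forall x, \sum_y plan S2 x y = mu x).
Hypotheses (col2 : forall y, \sum_x plan S2 x y = nu y).
Hypothesis S_rel : forall x y, dl * S2 x y = S1 x y + e x + d y.

Lemma separated_S_le A B g : 2 * ln M%:R <= g ->
  (forall x y, A x -> B y -> S1 x y + g < dl * S2 x y) ->
  (forall x y, ~~ A x -> ~~ B y -> dl * S2 x y < S1 x y - g) ->
  (forall x y, A x -> B y -> S1 x y <= - ln M%:R) /\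
  (forall x y, ~~ A x -> ~~ B y -> S2 x y <= - ln M%:R).
Proof.
move=> g_ge sep_up sep_lo.
have lnM0 : 0 <= ln M%:R :> R by rewrite ln_ge0 // ler1n.
have dl_lnM : dl * ln M%:R <= ln M%:R by rewrite ler_piMl.
split=> x y Ax By.
  have := sep_up x y Ax By.
  have : dl * S2 x y <= dl * ln M%:R by rewrite ler_pM2l // plan_row_S_le.
  lra.
rewrite leNgt; apply/negP => S2_gt.
have := sep_lo x y Ax By; have := plan_row_S_le y (row1 x).
have : dl * - ln M%:R < dl * S2 x y by rewrite ltr_pM2l.
lra.
Qed.

Lemma no_potential_gap a : (exists y, d y <= a) -> (exists y, a + gap_width < d y) ->
  exists y, a < d y <= a + gap_width.
Proof.
move=> [yl yl_lo] [yh yh_hi].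
have [/existsP [y /andP [? ?]] | /existsPn none] :=
  boolP [exists y, (a < d y) && (d y <= a + gap_width)]; first by exists y; apply/andP.
exfalso; pose g : R := 2 * ln M%:R + ln N%:R.
have lnM0 : 0 <= ln M%:R :> R by rewrite ln_ge0 // ler1n.
have lnN0 : 0 <= ln N%:R :> R by rewrite ln_ge0 // ler1n (leq_trans X_nonempty XN).
have G0 := gap_width_ge0.
have Gg : gap_width = 2 * g by rewrite /gap_width /g; ring.
pose A : pred X := fun x => 0 <= e x + (a + g).
pose B : pred Y := fun y => a + gap_width < d y.
have low y : ~~ B y -> d y <= a.
  by rewrite /B -leNgt => dy_le; have := none y; rewrite dy_le andbT -leNgt.
have sep_up x y : A x -> B y -> S1 x y + g < dl * S2 x y.
  by rewrite /A /B Gg S_rel => ? ?; lra.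
have sep_lo x y : ~~ A x -> ~~ B y -> dl * S2 x y < S1 x y - g.
  by rewrite /A -ltNge S_rel => ? /low ?; lra.
have g_ge : 2 * ln M%:R <= g by rewrite /g; lra.
have [S1_up S2_lo] := separated_S_le g_ge sep_up sep_lo.
have yl_out : ~~ B yl by rewrite /B -leNgt; lra.
have yh_in : ~~ predC B yh by rewrite /= negbK.
have [bal1 bal2] := coupling_block_balance row1 col1 row2 col2 (@plan_ge0 S1) (@plan_ge0 S2)
  (plan_block_lt_invM yl_out S1_up) (plan_block_lt_invM yh_in S2_lo).
have F0 : 0 < block_mass (plan S1) A B.
  have /card_gt0P [x1 _] := X_nonempty.
  have [Ax1|nAx1] := boolP (A x1).
    exact: lt_le_trans (plan_gt0 S1 x1 yh) (ler_block_mass_entry (@plan_ge0 S1) Ax1 yh_hi).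
  apply: lt_le_trans (plan_gt0 S1 x1 yl) _; rewrite -bal1.
  exact: ler_block_mass_entry (@plan_ge0 S1) nAx1 yl_out.
have dl01 : 0 < dl <= 1 by rewrite dl_gt0 dl_le1.
by have := block_separation_lt dl01 sep_up sep_lo bal1 bal2 F0; rewrite /g; lra.
Qed.

Lemma potential_spread y y' : d y - d y' <= (#|Y|.-1)%:R * gap_width.
Proof. exact: spread_le_of_no_gap gap_width_ge0 no_potential_gap y y'. Qed.

End PotentialGap.

Section Annealing.
Variables (c : X -> Y -> R) (eps1 eps2 : R).
Variables (alpha1 alpha2 : X -> R) (beta1 beta2 : Y -> R).
Hypotheses (eps2_gt0 : 0 < eps2) (eps2_lt : eps2 < eps1).
Hypothesis opt1 : is_Jmaximizer eps1 c mu nu alpha1 beta1.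
Hypothesis opt2 : is_Jmaximizer eps2 c mu nu alpha2 beta2.

Let eps1_gt0 : 0 < eps1. Proof. exact: lt_trans eps2_lt. Qed.
Let mu_ge0 x : 0 <= mu x. Proof. exact/ltW/mu_gt0. Qed.
Let nu_ge0 y : 0 <= nu y. Proof. exact/ltW/nu_gt0. Qed.

Let row_sum eps a b : 0 < eps -> is_Jmaximizer eps c mu nu a b ->
  forall x, \sum_y Jplan eps c mu nu a b x y = mu x.
Proof. move=> eps0 opt x; exact: Jmaximizer_row_sum eps0 (mu_gt0 x) nu_ge0 opt. Qed.

Let col_sum eps a b : 0 < eps -> is_Jmaximizer eps c mu nu a b ->
  forall y, \sum_x Jplan eps c mu nu a b x y = nu y.
Proof. move=> eps0 opt y; exact: Jmaximizer_col_sum eps0 (nu_gt0 y) mu_ge0 opt. Qed.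

Let S1 x y := (alpha1 x + beta1 y - c x y) / eps1.
Let e x := (alpha2 x - alpha1 x) / eps1.
Let d y := (beta2 y - beta1 y) / eps1.

Lemma annealed_mean_le : \sum_x mu x * e x + \sum_y nu y * d y <= 0.
Proof.
have mass1 eps a b : 0 < eps -> is_Jmaximizer eps c mu nu a b ->
    \sum_x \sum_y Jplan eps c mu nu a b x y = 1.
  by move=> eps0 opt; rewrite -mu_sum1; apply: eq_bigr => x _; exact: row_sum.
have := Jmaximizer_mean_le eps1_gt0 opt1 (mass1 _ _ _ eps1_gt0 opt1)
  (Jplan_mass_le1 mu_ge0 nu_ge0 mu_sum1 nu_sum1 eps2_gt0 (ltW eps2_lt)
    (mass1 _ _ _ eps2_gt0 opt2)).
have inv_gt0 : 0 < eps1^-1 by rewrite invr_gt0.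
rewrite -(pmulr_rle0 _ inv_gt0) mulrDr !mulr_sumr.
by congr (_ + _ <= 0); apply: eq_bigr => ? _; rewrite /e /d; field; rewrite gt_eqF.
Qed.

Lemma annealed_shift_le y : \sum_x mu x * e x + d y <= (#|Y|.-1)%:R * gap_width.
Proof.
have spread y' : d y - d y' <= (#|Y|.-1)%:R * gap_width.
  apply: (potential_spread (S1 := S1) (S2 := fun x y => (alpha2 x + beta2 y - c x y) / eps2)
            (e := e) (dl := eps2 / eps1)).
  - by rewrite divr_gt0.
  - by rewrite ler_pdivrMr // mul1r ltW.
  - exact: row_sum.
  - exact: col_sum.
  - exact: row_sum.
  - exact: col_sum.
  - by move=> x y'' /=; rewrite /S1 /e /d; field; rewrite !gt_eqF.
have : d y - \sum_y' nu y' * d y' <= (#|Y|.-1)%:R * gap_width.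
  rewrite -[d y]mul1r -nu_sum1 mulr_suml -sumrB.
  apply: le_trans (_ : \sum_y' nu y' * ((#|Y|.-1)%:R * gap_width) <= _).
    by apply: ler_sum => y' _; rewrite -mulrBr ler_wpM2l.
  by rewrite -mulr_suml nu_sum1 mul1r.
by have := annealed_mean_le; lra.
Qed.

Let eps2_neq0 : eps2 != 0. Proof. exact: lt0r_neq0. Qed.
Let K := Kmat eps2 c mu nu.
Let K_gt0 x y : 0 < K x y. Proof. exact: Kmat_gt0 (mu_gt0 x) (nu_gt0 y). Qed.
Let v0 y := expR (beta1 y / eps2).

Lemma cooler_plan_row_le x :
  \sum_y Jplan eps2 c mu nu alpha1 beta1 x y <= expR ((eps1 / eps2 - 1) * ln M%:R) * mu x.
Proof.
rewrite -(row_sum eps1_gt0 opt1 x) mulr_sumr; apply: ler_sum => y _.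
rewrite /Jplan [leRHS]mulrCA; apply: ler_wpM2l; first exact: mulr_ge0.
rewrite -expRD ler_expR.
have -> : (alpha1 x + beta1 y - c x y) / eps2 = S1 x y + (eps1 / eps2 - 1) * S1 x y.
  by rewrite /S1; field; rewrite !gt_eqF.
have S1_le : S1 x y <= ln M%:R by apply: plan_row_S_le; exact: row_sum.
have : 0 <= eps1 / eps2 - 1 by rewrite subr_ge0 ler_pdivlMr // mul1r ltW.
by move=> /ler_wpM2l /(_ _ _ S1_le); rewrite /S1; lra.
Qed.

Lemma ln_Kv_start_le x :
  ln (Kv K v0 x) <= ln (mu x) - alpha1 x / eps2 + (eps1 / eps2 - 1) * ln M%:R.
Proof.
have Kv0_gt0 : 0 < Kv K v0 x by apply: Kv_gt0 => // y; exact: expR_gt0.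
rewrite -ler_expR lnK ?posrE // !expRD lnK ?posrE ?mu_gt0 //.
have -> : Kv K v0 x = Kv K (fun y => expR ((beta1 y + 0) / eps2)) x.
  by apply: eq_bigr => y _; rewrite addr0.
rewrite (Kv_Kmat_expR c mu nu alpha1 beta1 eps2_neq0) sub0r mulNr.
rewrite [leRHS]mulrC mulrA [leRHS]mulrC.
by apply: ler_wpM2l; [exact: expR_ge0 | exact: cooler_plan_row_le].
Qed.

Lemma ln_Kv_barrierE m x :
  ln (Kv K (fun y => expR ((beta2 y + m) / eps2)) x) = ln (mu x) + (m - alpha2 x) / eps2.
Proof.
rewrite (Kv_Kmat_expR c mu nu alpha2 beta2 eps2_neq0) (row_sum eps2_gt0 opt2).
by rewrite lnM ?posrE ?expR_gt0 ?mu_gt0 // expRK addrC.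
Qed.

Lemma annealed_deficit_sum_le n :
  \sum_(l < n) (1 - sk_q K mu nu v0 l.+1)
  <= eps1 / eps2 * (N%:R * (4 * ln N%:R + 24 * ln M%:R) + ln M%:R).
Proof.
(* The barrier is the eps2-scaling exp(beta2/eps2) shifted below v^(0). *)
have /card_gt0P [y1 _] := Y_nonempty.
case: (arg_minP (fun y => beta1 y - beta2 y) (isT : xpredT y1)) => ys _ ys_min.
pose ms := beta1 ys - beta2 ys; pose w y := expR ((beta2 y + ms) / eps2).
have w_fixed y : w y <= sk_map K mu nu w y.
  by rewrite /w (sk_map_Kmat_fixed eps2_neq0 ms (row_sum eps2_gt0 opt2)
    (col_sum eps2_gt0 opt2) mu_gt0 (nu_gt0 y)).
have w_le_v0 y : w y <= v0 y.
  by rewrite ler_expR ler_pM2r ?invr_gt0 //; have := ys_min y isT; rewrite /ms; lra.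
apply: le_trans (sk_deficit_sum_le K_gt0 mu_gt0 nu_ge0 mu_sum1 X_nonempty Y_nonempty
  (fun y => expR_gt0 _) w_fixed w_le_v0 n) _.
set rho := eps1 / eps2.
have term_le x : ln (Kv K v0 x) - ln (Kv K w x)
    <= rho * (e x + d ys) + (rho - 1) * ln M%:R.
  rewrite (ln_Kv_barrierE ms x); have := ln_Kv_start_le x.
  have -> : rho * (e x + d ys) = (alpha2 x - alpha1 x - ms) / eps2.
    by rewrite /rho /e /d /ms; field; rewrite !gt_eqF.
  rewrite /rho; lra.
apply: le_trans (_ : \sum_x mu x * (rho * (e x + d ys) + (rho - 1) * ln M%:R) <= _).
  by apply: ler_sum => x _; apply: ler_wpM2l.
rewrite (eq_bigr (fun x => rho * (mu x * e x) + mu x * (rho * d ys + (rho - 1) * ln M%:R)));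
  last by move=> x _; ring.
rewrite big_split /= -mulr_sumr -mulr_suml mu_sum1 mul1r.
have rho_ge1 : 1 <= rho by rewrite ler_pdivlMr // mul1r ltW.
have lnM0 : 0 <= ln M%:R :> R by rewrite ln_ge0 // ler1n.
have lnN0 : 0 <= ln N%:R :> R by rewrite ln_ge0 // ler1n (leq_trans X_nonempty XN).
have spread : \sum_x mu x * e x + d ys <= N%:R * (4 * ln N%:R + 24 * ln M%:R).
  apply: le_trans (annealed_shift_le ys) _; apply: ler_pM.
  - by rewrite ler0n.
  - exact: gap_width_ge0.
  - by rewrite ler_nat (leq_trans (leq_pred _) YN).
  - by rewrite /gap_width; lra.
have rho_ge0 : 0 <= rho by lra.
by have := ler_wpM2l rho_ge0 spread; lra.
Qed.

End Annealing.

End IntegralMarginals.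

Theorem mainTheorem10 (R : realType) (X Y : finType) (N M : nat)
  (c : X -> Y -> R) (r : X -> nat) (s : Y -> nat)
  (mu : X -> R) (nu : Y -> R)
  (eps1 eps2 : R) (alpha1 : X -> R) (beta1 : Y -> R)
  (alpha2 : X -> R) (beta2 : Y -> R) :
  (#|X| <= N)%N -> (#|Y| <= N)%N ->
  (forall x y, 0 <= c x y) ->
  (0 < M)%N ->
  (forall x, (0 < r x)%N) -> (forall y, (0 < s y)%N) ->
  (forall x, mu x = (r x)%:R / M%:R) -> (forall y, nu y = (s y)%:R / M%:R) ->
  \sum_(x : X) mu x = 1 -> \sum_(y : Y) nu y = 1 ->
  0 < eps2 -> eps2 < eps1 ->
  is_Jmaximizer eps1 c mu nu alpha1 beta1 ->
  is_Jmaximizer eps2 c mu nu alpha2 beta2 ->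
  forall qt : R, 0 < qt -> qt < 1 ->
  exists n : nat, (1 <= n)%N /\
    n%:R <= 2 + eps1 / eps2 *
      ((N%:R * (4 * ln N%:R + 24 * ln M%:R) + ln M%:R) / (1 - qt)) /\
    qt <= sk_q (Kmat eps2 c mu nu) mu nu (fun y => expR (beta1 y / eps2)) n.
Proof.
move=> XN YN _ M_gt0 r_gt0 s_gt0 muE nuE mu_sum1 nu_sum1 eps2_gt0 eps2_lt opt1 opt2.
move=> qt qt0 qt1.
have deficit_le := annealed_deficit_sum_le XN YN M_gt0 r_gt0 s_gt0 muE nuE
  mu_sum1 nu_sum1 eps2_gt0 eps2_lt opt1 opt2.
have bound_ge0 := deficit_le 0; rewrite big_ord0 in bound_ge0.
have [n [n_gt0 [n_le q_ge]]] := exists_ge_of_deficit_sum_le qt1 bound_ge0 deficit_le.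
by exists n; split => //; split => //; lra.
Qed.
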